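(* Let $g\ge 3$, let $(\alpha,\beta)$ be a coherent minimally intersecting filling pair on $S_g$, and let $a_1,\dots,a_{2(2g-1)}$ be the $\alpha$-sides of the $4(2g-1)$-gon $P$ obtained by cutting $S_g$ along $\alpha\cup\beta$, in cyclic clockwise order. If $a_i$ and $a_j$ with $i\neq j$ are glued to each other (i.e. are the two copies of the same subarc of $\alpha$), then: (1) $d(a_i,a_j)$ is odd; and (2) $d(a_i,a_j)\neq 1$.
   Context: $S_g$ is the closed orientable surface of genus $g$. A filling pair is a pair of simple closed curves in minimal position whose complement is a union of open disks. It is minimally intersecting if $i(\alpha,\beta)$ is minimal among filling pairs on $S_g$; for $g\ge3$ this minimum is $2g-1$. It is coherent if the absolute value of the algebraic intersection number equals $i(\alpha,\beta)$. For such a pair with $g\ge3$, $S_g\setminus(\alpha\cup\beta)$ is a single disk. Its closure is a $4(2g-1)$-gon $P$ whose sides alternate between subarcs of $\alpha$ and of $\beta$, with each subarc appearing as exactly two sides. The distance between $\alpha$-sides is $$d(a_i,a_j)=\begin{cases}|i-j|, & |i-j|\le 2g-1,\\ 2(2g-1)-|i-j|, & |i-j|>2g-1.\end{cases}$$ *)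

From mathcomp Require Import all_boot all_order all_algebra all_fingroup.
Set Implicit Arguments. Unset Strict Implicit. Unset Printing Implicit Defensive.

(* n = i(alpha,beta) intersection points, labelled by 'I_n.
   alpha visits them in the cyclic order given by the permutation [a]
   (alpha goes from p to a p), beta in the cyclic order given by [b].
   [eps p] is the sign of the crossing at p (true = +1).

   Darts (half-edges) at a vertex p: kind 0 = alpha outgoing,
   1 = beta outgoing, 2 = alpha incoming, 3 = beta incoming.
   Counterclockwise cyclic order at p (transverse crossing):
     eps p = true  : 0,1,2,3   (alpha+, beta+, alpha-, beta-)
     eps p = false : 0,3,2,1   (alpha+, beta-, alpha-, beta+). *)
Definition dart (n : nat) := ('I_n * 'I_4)%type.

Definition rot n (eps : 'I_n -> bool) (d : dart n) : dart n :=
  (d.1, if eps d.1 then inord ((val d.2 + 1) %% 4) else inord ((val d.2 + 3) %% 4)).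

Definition edge_inv n (a b : {perm 'I_n}) (d : dart n) : dart n :=
  match val d.2 with
  | 0 => (a d.1, inord 2)
  | 1 => (b d.1, inord 3)
  | 2 => ((a^-1)%g d.1, inord 0)
  | _ => ((b^-1)%g d.1, inord 1)
  end.

(* face permutation of the ribbon graph alpha \cup beta: its orbits are the
   boundary cycles of the components of S \ (alpha \cup beta); the dart d
   of an orbit is the side of the polygon traversed along the edge of d. *)
Definition face_perm n (a b : {perm 'I_n}) (eps : 'I_n -> bool) (d : dart n) : dart n :=
  rot eps (edge_inv a b d).

(* a permutation describing a closed curve through all n points: one cycle *)
Definition is_full_cycle n (s : {perm 'I_n}) : Prop :=
  forall x y : 'I_n, fconnect s x y.

(* S \ (alpha \cup beta) is a single open disk: one face *)
Definition single_face n (a b : {perm 'I_n}) (eps : 'I_n -> bool) : Prop :=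
  forall d d' : dart n, fconnect (face_perm a b eps) d d'.

Definition alg_int n (eps : 'I_n -> bool) : int :=
  (\sum_(p < n) (if eps p then 1 else -1))%R.

Definition coherent n (eps : 'I_n -> bool) : Prop :=
  absz (alg_int eps) = n.

Definition is_alpha n (d : dart n) : bool := ~~ odd (val d.2).

(* the subarc of alpha (edge of the graph) carried by an alpha-dart:
   the alpha-edge from p to a p is named p *)
Definition alpha_edge n (a : {perm 'I_n}) (d : dart n) : 'I_n :=
  if val d.2 == 0 then d.1 else (a^-1)%g d.1.

Definition alpha_sides n (a b : {perm 'I_n}) (eps : 'I_n -> bool) (d0 : dart n)
  : seq (dart n) :=
  [seq d <- traject (face_perm a b eps) d0 (4 * n) | is_alpha d].

Definition side_dist (g i j : nat) : nat :=
  let k := if i <= j then j - i else i - j in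
  if k <= 2 * g - 1 then k else 2 * (2 * g - 1) - k.

(* Coherence forces all crossings to have the same sign. Then, going around
   the boundary of the unique face, consecutive alpha-sides run alternately
   along and against the orientation of alpha, whereas the two copies of an
   alpha-subarc run in opposite directions. So glued sides a_i, a_j have
   indices of opposite parity, and d(a_i, a_j) is odd. Two consecutive
   alpha-sides are separated by one beta-side; they are copies of the same
   alpha-subarc only if that beta-subarc is a loop, i.e. beta has a fixed
   point, which is impossible for a single curve through n > 1 points. *)

From Pilot Require Import Defs.
From mathcomp Require Import all_boot all_order all_algebra all_fingroup zify.
Set Implicit Arguments. Unset Strict Implicit. Unset Printing Implicit Defensive.
Import GRing.Theory.

Section AlternatingOrbit.

Variables (T : Type) (f : T -> T) (P : pred T).
Hypothesis P_f : forall x, P (f x) = ~~ P x.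

Lemma iter_alternating m x : P (iter m f x) = P x (+) odd m.
Proof. by elim: m => [|m IHm] /=; rewrite ?addbF // P_f IHm addbN. Qed.

Lemma nth_filter_traject_alternating x0 x m i : i < m ->
  nth x0 [seq y <- traject f x (2 * m) | P y] i = iter (2 * i + ~~ P x) f x.
Proof.
elim: m x i => [//|m IHm] x i lt_i_m.
have PffE : P (f (f x)) = P x by rewrite !P_f negbK.
rewrite mulnS /= P_f; case: i lt_i_m => [|i] lt_i_m; first by case: (P x).
have -> : 2 * i.+1 + ~~ P x = (2 * i + ~~ P (f (f x))).+2 by rewrite PffE mulnS.
by rewrite !iterSr -IHm //; case: (P x).
Qed.

End AlternatingOrbit.

Lemma iter_mod_order (T : finType) (f : T -> T) : injective f ->
  forall m x, iter (m %% fingraph.order f x) f x = iter m f x.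
Proof.
move=> injf m x; rewrite {2}(divn_eq m (fingraph.order f x)) addnC iterD iterM.
by rewrite (iter_fix _ (iter_order injf x)).
Qed.

Lemma full_cycle_fixpointfree n (s : {perm 'I_n}) :
  1 < n -> is_full_cycle s -> forall x, s x != x.
Proof.
move=> n_gt1 full_s x; apply/negP => /eqP sx.
have orbit_x y : y = x.
  by have /iter_findex <- := full_s x y; rewrite iter_fix.
have := orbit_x (Ordinal n_gt1).
by rewrite -[x](orbit_x (Ordinal (ltnW n_gt1))) => /(congr1 val).
Qed.

Lemma alg_intE n (eps : 'I_n -> bool) :
  alg_int eps = (#|[pred p | eps p]|%:Z - #|[pred p | ~~ eps p]|%:Z)%R.
Proof.
rewrite /alg_int (bigID eps) /= (eq_bigr (fun=> 1%R)) => [|p ->//].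
rewrite [X in (_ + X)%R](eq_bigr (fun=> (-1)%R)) => [|p /negbTE ->//].
by rewrite !sumr_const mulNrn !natz.
Qed.

Lemma coherent_sign_const n (eps : 'I_n -> bool) :
  coherent eps -> exists c, forall p, eps p = c.
Proof.
rewrite /coherent alg_intE => coh.
have := cardC [pred p | eps p]; rewrite card_ord.
set t := #|_| in coh *; set u := #|_| in coh * => tu.
have [t0 | u0] : t = 0 \/ u = 0 by lia.
- by exists false => p; apply/negbTE/negP => eps_p; move/card0_eq/(_ p): t0; rewrite inE eps_p.
- by exists true => p; apply/negPn/negP => eps_p; move/card0_eq/(_ p): u0; rewrite inE eps_p.
Qed.

Section RibbonGraph.

Variables (n : nat) (a b : {perm 'I_n}) (eps : 'I_n -> bool).

Local Notation f := (face_perm a b eps).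

Definition alpha_out (d : dart n) : bool := val d.2 == 0.

Lemma rot_inj : injective (Defs.rot eps).
Proof.
move=> [p [k lt_k4]] [q [l lt_l4]]; rewrite /Defs.rot /= => -[<-].
case: (eps p) => /(congr1 (@nat_of_ord 4)); rewrite !inordK ?ltn_pmod // => /eqP.
all: by rewrite eqn_modDr !modn_small // => /eqP kl; congr pair; apply: val_inj.
Qed.

Lemma edge_invK : involutive (edge_inv a b).
Proof.
move=> [p [[|[|[|[|k]]]] lt_k4]] //=; rewrite /edge_inv /= inordK //= ?permK ?permKV.
all: by congr pair; apply: val_inj; rewrite /= inordK.
Qed.

Lemma face_perm_inj : injective f.
Proof. by move=> d d' /rot_inj /(inv_inj edge_invK). Qed.

Lemma face_permE d : f d =
  match val d.2 with
  | 0 => (a d.1, inord (if eps (a d.1) then 3 else 1))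
  | 1 => (b d.1, inord (if eps (b d.1) then 0 else 2))
  | 2 => ((a^-1)%g d.1, inord (if eps ((a^-1)%g d.1) then 1 else 3))
  | _ => ((b^-1)%g d.1, inord (if eps ((b^-1)%g d.1) then 2 else 0))
  end.
Proof.
case: d => p [[|[|[|[|k]]]] lt_k4] //; rewrite /face_perm /edge_inv /Defs.rot /= inordK //.
all: by case: eps.
Qed.

Lemma is_alpha_face_perm d : is_alpha (f d) = ~~ is_alpha d.
Proof.
rewrite face_permE /is_alpha; case: d => p [[|[|[|[|k]]]] lt_k4] //=.
all: by case: eps; rewrite inordK.
Qed.

Lemma alpha_edge_inj d d' : is_alpha d -> is_alpha d' -> alpha_out d = alpha_out d' ->
  alpha_edge a d = alpha_edge a d' -> d = d'.
Proof.
case: d d' => p [[|[|[|[|k]]]] lt_k4] [q [[|[|[|[|l]]]] lt_l4]] //=.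
- by rewrite /alpha_edge /= => _ _ _ ->; congr pair; apply: val_inj.
- by rewrite /alpha_edge /= => _ _ _ /perm_inj ->; congr pair; apply: val_inj.
Qed.

Lemma single_face_order d : single_face a b eps -> fingraph.order f d = 4 * n.
Proof.
move=> one_face; rewrite /fingraph.order (eq_card (B := predT)) => [|d'].
  by rewrite card_prod !card_ord mulnC.
by rewrite !inE one_face.
Qed.

Variable d0 : dart n.
Hypothesis one_face : single_face a b eps.

Definition alpha_side k := iter (2 * k + ~~ is_alpha d0) f d0.

Lemma nth_alpha_sides k : k < 2 * n -> nth d0 (alpha_sides a b eps d0) k = alpha_side k.
Proof.
rewrite /alpha_sides (_ : 4 * n = 2 * (2 * n)); last by rewrite mulnA.
by move=> lt_k; rewrite (nth_filter_traject_alternating is_alpha_face_perm).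
Qed.

Lemma is_alpha_alpha_side k : is_alpha (alpha_side k).
Proof. by rewrite (iter_alternating is_alpha_face_perm) oddD oddM /=; case: is_alpha. Qed.

Lemma alpha_sideS k : alpha_side k.+1 = f (f (alpha_side k)).
Proof. by rewrite /alpha_side mulnS !addSn. Qed.

Lemma alpha_side_mod k : alpha_side (k %% (2 * n)) = alpha_side k.
Proof.
have n_gt0 : 0 < n by have := ltn_ord d0.1; lia.
rewrite /alpha_side -(iter_mod_order face_perm_inj (2 * k + _)) single_face_order //.
congr iter; rewrite {2}(divn_eq k (2 * n)) mulnDr mulnCA (mulnA 2 2 n) -addnA modnMDl.
apply/esym/modn_small.
have : k %% (2 * n) < 2 * n by rewrite ltn_pmod // muln_gt0 n_gt0.
by move: (k %% _) => r; case: is_alpha => /=; lia.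
Qed.

Lemma alpha_side_inj i j : i < 2 * n -> j < 2 * n -> alpha_side i = alpha_side j -> i = j.
Proof.
have findex_side k : k < 2 * n -> findex f d0 (alpha_side k) = 2 * k + ~~ is_alpha d0.
  by move=> lt_k; apply: findex_iter; rewrite single_face_order //; case: is_alpha => /=; lia.
by move=> lt_i lt_j eq_ij; have := findex_side i lt_i; rewrite eq_ij findex_side //; lia.
Qed.

Variable c : bool.
Hypothesis eps_c : forall p, eps p = c.
Hypothesis b_fixfree : forall p, b p != p.

Lemma alpha_out_face_perm2 d : is_alpha d -> alpha_out (f (f d)) = ~~ alpha_out d.
Proof.
rewrite (face_permE (f d)) face_permE !eps_c /is_alpha /alpha_out.
by case: d => p [[|[|[|[|k]]]] lt_k4] //= _; case: c; rewrite !inordK.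
Qed.

Lemma alpha_edge_face_perm2 d : is_alpha d -> alpha_edge a (f (f d)) != alpha_edge a d.
Proof.
have b_fixfreeV p : (b^-1)%g p != p.
  by apply: contra (b_fixfree ((b^-1)%g p)) => /eqP fix_p; rewrite permKV fix_p.
rewrite (face_permE (f d)) face_permE !eps_c /is_alpha /alpha_edge.
case: d => p [[|[|[|[|k]]]] lt_k4] //= _; case: c.
all: by rewrite !inordK //= (can2_eq (permKV a) (permK a)).
Qed.

Lemma alpha_out_alpha_side k : alpha_out (alpha_side k) = alpha_out (alpha_side 0) (+) odd k.
Proof.
elim: k => [|k IHk]; first by rewrite addbF.
by rewrite alpha_sideS alpha_out_face_perm2 ?is_alpha_alpha_side // IHk /= addbN.
Qed.

Lemma glued_alpha_sides_parity i j : i < 2 * n -> j < 2 * n -> i != j ->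
  alpha_edge a (alpha_side i) = alpha_edge a (alpha_side j) -> odd i != odd j.
Proof.
move=> lt_i lt_j neq_ij glued; apply: contra_neq neq_ij => par.
apply: (alpha_side_inj lt_i lt_j).
apply: (alpha_edge_inj (is_alpha_alpha_side i) (is_alpha_alpha_side j) _ glued).
by rewrite (alpha_out_alpha_side i) (alpha_out_alpha_side j) par.
Qed.

Lemma alpha_edge_alpha_side_succ k :
  alpha_edge a (alpha_side (k.+1 %% (2 * n))) != alpha_edge a (alpha_side k).
Proof. by rewrite alpha_side_mod alpha_sideS alpha_edge_face_perm2 ?is_alpha_alpha_side. Qed.

End RibbonGraph.

Lemma odd_side_dist g i j : i < 2 * (2 * g - 1) -> j < 2 * (2 * g - 1) ->
  odd (i + j) -> odd (side_dist g i j).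
Proof.
move=> lt_i lt_j; rewrite /side_dist.
have oddE k : odd k = (k %% 2 == 1) by rewrite modn2; case: odd.
by rewrite !oddE => /eqP odd_ij; case: ifP => le_ij; case: ifP => short; apply/eqP; lia.
Qed.

Lemma side_dist_eq1 g i j : i < 2 * (2 * g - 1) -> j < 2 * (2 * g - 1) ->
  side_dist g i j = 1 -> j = i.+1 %% (2 * (2 * g - 1)) \/ i = j.+1 %% (2 * (2 * g - 1)).
Proof.
rewrite /side_dist; set N := 2 * (2 * g - 1) => lt_i lt_j dist1.
have [[ji | ij] | [[iN j0] | [jN i0]]] :
    (j = i.+1 \/ i = j.+1) \/ (i.+1 = N /\ j = 0 \/ j.+1 = N /\ i = 0).
  by move: dist1; rewrite /N; case: ifP => le_ij; case: ifP => short; lia.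
- by left; rewrite -ji modn_small.
- by right; rewrite -ij modn_small.
- by left; rewrite iN modnn.
- by right; rewrite jN modnn.
Qed.

Theorem lemma6 (g : nat) (a b : {perm 'I_(2 * g - 1)})
  (eps : 'I_(2 * g - 1) -> bool) :
  3 <= g ->
  is_full_cycle a -> is_full_cycle b ->
  single_face a b eps ->
  coherent eps ->
  forall (d0 : dart (2 * g - 1)) (i j : nat),
    i < 2 * (2 * g - 1) -> j < 2 * (2 * g - 1) -> i != j ->
    alpha_edge a (nth d0 (alpha_sides a b eps d0) i)
      = alpha_edge a (nth d0 (alpha_sides a b eps d0) j) ->
    odd (side_dist g i j) /\ side_dist g i j != 1.
Proof.
move=> g_ge3; have n_gt1 : 1 < 2 * g - 1 by lia.
move=> _ full_b one_face /coherent_sign_const [c eps_c] d0 i j lt_i lt_j neq_ij.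
rewrite !nth_alpha_sides // => glued.
have b_fixfree := full_cycle_fixpointfree n_gt1 full_b.
have succ_not_glued := alpha_edge_alpha_side_succ d0 one_face eps_c b_fixfree.
have par := glued_alpha_sides_parity one_face eps_c lt_i lt_j neq_ij glued.
split.
  by apply: odd_side_dist => //; rewrite oddD; case: (odd i) par; case: (odd j).
apply/eqP => /(side_dist_eq1 lt_i lt_j) [ji | ij].
- by move: (succ_not_glued i); rewrite -ji glued eqxx.
- by move: (succ_not_glued j); rewrite -ij glued eqxx.
Qed.
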